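(* Assume (OP). Then for every $A\subseteq P$, $\operatorname{dcl}_{\mathcal L(P)}(A)=\operatorname{dcl}(A)$.
   Context: Let $\mathcal M=\langle M,<,+,0,\dots\rangle$ be an o-minimal expansion of an ordered group with a distinguished positive element $1$, in a language $\mathcal L$; $\operatorname{dcl}$ denotes definable closure in $\mathcal M$, and ''$\mathcal L_A$-definable'' means definable in $\mathcal M$ with parameters from $A$. Fix $P\subseteq M$ and let $\widetilde{\mathcal M}=\langle\mathcal M,P\rangle$, in the language $\mathcal L(P)$ obtained by adding a unary predicate for $P$; $\operatorname{dcl}_{\mathcal L(P)}$ is definable closure in $\widetilde{\mathcal M}$, and ''$A$-definable'' means definable in $\widetilde{\mathcal M}$ with parameters from $A$. A set $A$ is $\operatorname{dcl}$-independent over $P$ if no $a\in A$ lies in $\operatorname{dcl}((A\setminus\{a\})\cup P)$. $M^n$ has the product order topology. (OP): for every $A\subseteq M$ with $A\setminus P$ $\operatorname{dcl}$-independent over $P$ and every $A$-definable $V\subseteq M^n$, the topological closure $\overline V$ is $\mathcal L_A$-definable. *)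

From mathcomp Require Import all_boot.
Set Implicit Arguments. Unset Strict Implicit. Unset Printing Implicit Defensive.

Record language := Language {
  fsym : Type; farity : fsym -> nat;
  rsym : Type; rarity : rsym -> nat }.

Record structure (L : language) := Structure {
  carrier :> Type;
  finterp : forall f : fsym L, ('I_(farity f) -> carrier) -> carrier;
  rinterp : forall r : rsym L, ('I_(rarity r) -> carrier) -> Prop }.

(** Terms and formulas, variables as de Bruijn indices (nat). *)
Inductive term (L : language) : Type :=
  | Var : nat -> term L
  | App : forall f : fsym L, ('I_(farity f) -> term L) -> term L.

Inductive formula (L : language) : Type :=
  | FEq  : term L -> term L -> formula L
  | FRel : forall r : rsym L, ('I_(rarity r) -> term L) -> formula L
  | FNot : formula L -> formula L
  | FAnd : formula L -> formula L -> formula L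
  | FEx  : formula L -> formula L.   (* binds variable 0 *)

Section Semantics.
Variables (L : language) (M : structure L).

Fixpoint teval (e : nat -> M) (t : term L) : M :=
  match t with
  | Var k => e k
  | App f ts => @finterp L M f (fun i => teval e (ts i))
  end.

Definition scons (y : M) (e : nat -> M) : nat -> M :=
  fun k => match k with 0 => y | k'.+1 => e k' end.

Fixpoint sat (e : nat -> M) (phi : formula L) : Prop :=
  match phi with
  | FEq t1 t2 => teval e t1 = teval e t2
  | FRel r ts => @rinterp L M r (fun i => teval e (ts i))
  | FNot p => ~ sat e p
  | FAnd p q => sat e p /\ sat e q
  | FEx p => exists y : M, sat (scons y e) p
  end.

End Semantics.

Fixpoint tvars_lt (L : language) (k : nat) (t : term L) : Prop :=
  match t with
  | Var i => (i < k)%N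
  | App f ts => forall i, tvars_lt k (ts i)
  end.

Fixpoint fvars_lt (L : language) (k : nat) (phi : formula L) : Prop :=
  match phi with
  | FEq t1 t2 => tvars_lt k t1 /\ tvars_lt k t2
  | FRel r ts => forall i, tvars_lt k (ts i)
  | FNot p => fvars_lt k p
  | FAnd p q => fvars_lt k p /\ fvars_lt k q
  | FEx p => fvars_lt k.+1 p
  end.

(** [definable M A n V]: V ⊆ M^n is definable in M with parameters from A:
    V = { x | M ⊨ phi(x_0..x_{n-1}, a_0..a_{m-1}) } with a_j ∈ A,
    where the variables of phi are among 0..n+m-1 (x first, then a). *)
Definition definable (L : language) (M : structure L) (A : M -> Prop)
    (n : nat) (V : ('I_n -> M) -> Prop) : Prop :=
  exists (phi : formula L) (m : nat) (a : 'I_m -> M),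
    fvars_lt (n + m) phi /\ (forall j, A (a j)) /\
    forall x : 'I_n -> M,
      V x <-> (forall e : nat -> M,
                 (forall i : 'I_n, e i = x i) ->
                 (forall j : 'I_m, e (n + j)%N = a j) -> sat e phi).

Definition dcl (L : language) (M : structure L) (A : M -> Prop) : M -> Prop :=
  fun b => definable A (fun x : 'I_1 -> M => x ord0 = b).

Definition langP (L : language) : language :=
  {| fsym := fsym L; farity := @farity L;
     rsym := option (rsym L);
     rarity := fun r => match r with Some r' => rarity r' | None => 1%N end |}.

Definition expandP (L : language) (M : structure L) (P : M -> Prop)
  : structure (langP L) :=
  @Structure (langP L) M
     (@finterp L M)
     (fun r : option (rsym L) =>
       match r as s return ('I_(@rarity (langP L) s) -> M) -> Prop with
       | Some r' => @rinterp L M r'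
       | None => fun v => P (v ord0)
       end).

Record ogroup_expansion (L : language) (M : structure L) := OGExp {
  lt_sym : rsym L; add_sym : fsym L; zero_sym : fsym L; one_sym : fsym L;
  lt_arity : rarity lt_sym = 2%N;
  add_arity : farity add_sym = 2%N;
  zero_arity : farity zero_sym = 0%N;
  one_arity : farity one_sym = 0%N;
  ltM : M -> M -> Prop; addM : M -> M -> M; zeroM : M; oneM : M;
  lt_interp : forall (v : 'I_(rarity lt_sym) -> M) (i j : 'I_(rarity lt_sym)),
      val i = 0%N -> val j = 1%N -> (@rinterp L M lt_sym v <-> ltM (v i) (v j));
  add_interp : forall (v : 'I_(farity add_sym) -> M) (i j : 'I_(farity add_sym)),
      val i = 0%N -> val j = 1%N -> @finterp L M add_sym v = addM (v i) (v j);
  zero_interp : forall v : 'I_(farity zero_sym) -> M, @finterp L M zero_sym v = zeroM;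
  one_interp : forall v : 'I_(farity one_sym) -> M, @finterp L M one_sym v = oneM;
  lt_irrefl : forall x, ~ ltM x x;
  lt_trans : forall x y z, ltM x y -> ltM y z -> ltM x z;
  lt_total : forall x y, ltM x y \/ x = y \/ ltM y x;
  addA : forall x y z, addM x (addM y z) = addM (addM x y) z;
  add0M : forall x, addM zeroM x = x;
  addM0 : forall x, addM x zeroM = x;
  addInv : forall x, exists y, addM x y = zeroM /\ addM y x = zeroM;
  lt_addl : forall x y z, ltM x y -> ltM (addM z x) (addM z y);
  lt_addr : forall x y z, ltM x y -> ltM (addM x z) (addM y z);
  zero_lt_one : ltM zeroM oneM }.

(** O-minimality: every definable (with arbitrary parameters) subset of M is a
    finite union of points and open intervals with endpoints in M ∪ {±∞}. *)
Definition o_minimal (L : language) (M : structure L) (G : ogroup_expansion M)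
  : Prop :=
  forall X : M -> Prop,
    definable (fun _ => True) (fun x : 'I_1 -> M => X (x ord0)) ->
    exists (k : nat) (pts : 'I_k -> M) (l : nat)
           (ivs : 'I_l -> option M * option M),
      forall x, X x <->
        ((exists i, x = pts i) \/
         exists j, let ab := ivs j in
           (match ab.1 with Some a => ltM G a x | None => True end) /\
           (match ab.2 with Some b => ltM G x b | None => True end)).

(** Topological closure in M^n, product of the order topology
    (M has no endpoints, so boxes of open intervals form a base). *)
Definition closure (L : language) (M : structure L) (G : ogroup_expansion M)
  (n : nat) (V : ('I_n -> M) -> Prop) : ('I_n -> M) -> Prop :=
  fun x => forall lo hi : 'I_n -> M,
    (forall i, ltM G (lo i) (x i) /\ ltM G (x i) (hi i)) ->
    exists y, V y /\ forall i, ltM G (lo i) (y i) /\ ltM G (y i) (hi i).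

Definition dcl_indep_over (L : language) (M : structure L) (B P : M -> Prop)
  : Prop :=
  forall b, B b -> ~ dcl (fun y => (B y /\ y <> b) \/ P y) b.

Definition OP (L : language) (M : structure L) (G : ogroup_expansion M)
  (P : M -> Prop) : Prop :=
  forall A : M -> Prop,
    dcl_indep_over (fun y => A y /\ ~ P y) P ->
    forall (n : nat) (V : ('I_n -> M) -> Prop),
      @definable (langP L) (expandP P) A n V ->
      definable A (closure G V).

(** Since [A ⊆ P], the set [A \ P] is empty, hence dcl-independent over [P], so
    (OP) applies: the closure of the [L(P)]-definable singleton [{b}] is
    [L_A]-definable, and singletons are closed in the order topology.
    Conversely every [L]-formula is an [L(P)]-formula with the same meaning. *)
From mathcomp Require Import all_boot.
From Stdlib Require FunctionalExtensionality.
(* Imported after mathcomp so that [closure] is not fingraph's. *)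
Import FunctionalExtensionality (functional_extensionality).

Set Implicit Arguments.
Unset Strict Implicit.

Section LiftToExpansion.
Variable L : language.

Fixpoint lift_term (t : term L) : term (langP L) :=
  match t with
  | Var k => Var (langP L) k
  | App f ts => @App (langP L) f (fun i => lift_term (ts i))
  end.

Fixpoint lift_formula (phi : formula L) : formula (langP L) :=
  match phi with
  | FEq t1 t2 => FEq (lift_term t1) (lift_term t2)
  | FRel r ts => @FRel (langP L) (Some r) (fun i => lift_term (ts i))
  | FNot p => FNot (lift_formula p)
  | FAnd p q => FAnd (lift_formula p) (lift_formula q)
  | FEx p => FEx (lift_formula p)
  end.

Lemma tvars_lt_lift k t : tvars_lt k t -> tvars_lt k (lift_term t).
Proof. by elim: t => [i|f ts IH] //= Hts i; apply: IH. Qed.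

Lemma fvars_lt_lift phi k : fvars_lt k phi -> fvars_lt k (lift_formula phi).
Proof.
elim: phi k => [t1 t2|r ts|p IH|p IHp q IHq|p IH] k /=.
- by case=> *; split; apply: tvars_lt_lift.
- by move=> Hts i; apply: tvars_lt_lift.
- exact: IH.
- by case=> *; split; [apply: IHp|apply: IHq].
- exact: IH.
Qed.

Variables (M : structure L) (P : M -> Prop).

Lemma teval_lift (e : nat -> M) t : @teval _ (expandP P) e (lift_term t) = teval e t.
Proof.
elim: t => [k|f ts IH] //=.
by congr finterp; apply: functional_extensionality => i; apply: IH.
Qed.

Lemma sat_lift phi (e : nat -> M) : @sat _ (expandP P) e (lift_formula phi) <-> sat e phi.
Proof.
elim: phi e => [t1 t2|r ts|p IH|p IHp q IHq|p IH] e /=.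
- by rewrite !teval_lift.
- have -> : (fun i => @teval _ (expandP P) e (lift_term (ts i))) = (fun i => teval e (ts i)).
    by apply: functional_extensionality => i; rewrite teval_lift.
  by [].
- by split=> Hn Hp; apply: Hn; apply/IH.
- by split=> [[/IHp ? /IHq ?]|[/IHp ? /IHq ?]].
- by split=> -[y Hy]; exists y; apply/IH.
Qed.

Lemma definable_expandP (A : M -> Prop) n (V : ('I_n -> M) -> Prop) :
  definable A V -> @definable (langP L) (expandP P) A n V.
Proof.
move=> [phi [m [a [Hvars [Ha HV]]]]].
exists (lift_formula phi), m, a; split; first exact: fvars_lt_lift.
split=> // x; split=> [/HV Hx e He1 He2|Hx].
- by apply/sat_lift; apply: Hx.
- by apply/HV => e He1 He2; apply/sat_lift; apply: Hx.
Qed.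

End LiftToExpansion.

Lemma definable_ext (L : language) (M : structure L) (A : M -> Prop) n
    (V W : ('I_n -> M) -> Prop) :
  (forall x, V x <-> W x) -> definable A V -> definable A W.
Proof.
move=> VW [phi [m [a [Hvars [Ha HV]]]]].
exists phi, m, a; do 2!split => //.
by move=> x; split=> [/VW/HV|/HV/VW].
Qed.

Section OrderTopology.
Variables (L : language) (M : structure L) (G : ogroup_expansion M).

Lemma exists_neg : exists y, ltM G y (zeroM G).
Proof.
have [y [one_y y_one]] := addInv G (oneM G).
exists y; case: (lt_total G y (zeroM G)) => [//|[y0|y_pos]].
- by move: one_y (zero_lt_one G); rewrite y0 addM0 => ->; move/lt_irrefl.
- have := lt_addl (oneM G) y_pos; rewrite one_y addM0 => one_neg.
  by case: (lt_irrefl (lt_trans (zero_lt_one G) one_neg)).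
Qed.

Lemma lt_add_pos x y : ltM G (zeroM G) y -> ltM G x (addM G x y).
Proof. by move=> /(lt_addl x); rewrite addM0. Qed.

Lemma lt_add_neg x y : ltM G y (zeroM G) -> ltM G (addM G x y) x.
Proof. by move=> /(lt_addl x); rewrite addM0. Qed.

Lemma closure_coord n (V : ('I_n -> M) -> Prop) x i l h :
  closure G V x -> ltM G l (x i) -> ltM G (x i) h ->
  exists z, V z /\ ltM G l (z i) /\ ltM G (z i) h.
Proof.
move=> clx lxi xih; have [y y_neg] := exists_neg.
pose lo j := if j == i then l else addM G (x j) y.
pose hi j := if j == i then h else addM G (x j) (oneM G).
have [|z [Vz zbox]] := clx lo hi.
  move=> j; rewrite /lo /hi; case: eqP => [->|_]; first by [].
  by split; [apply: lt_add_neg|apply: lt_add_pos; apply: zero_lt_one].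
by exists z; split=> //; move: (zbox i); rewrite /lo /hi eqxx.
Qed.

Lemma closure_point n (V : ('I_n -> M) -> Prop) (c x : 'I_n -> M) :
  (forall y, V y -> forall i, y i = c i) -> closure G V x -> forall i, x i = c i.
Proof.
move=> Vc clx i; have [y y_neg] := exists_neg.
case: (lt_total G (x i) (c i)) => [xc|[//|cx]].
- have [z [/Vc zc [_ zlt]]] := closure_coord clx (lt_add_neg (x i) y_neg) xc.
  by rewrite zc in zlt; case: (lt_irrefl zlt).
- have [z [/Vc zc [zgt _]]] :=
    closure_coord clx cx (lt_add_pos (x i) (zero_lt_one G)).
  by rewrite zc in zgt; case: (lt_irrefl zgt).
Qed.

End OrderTopology.

Theorem fact3p1 (L : language) (M : structure L) (G : ogroup_expansion M)
  (P : M -> Prop) :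
  o_minimal G -> OP G P ->
  forall A : M -> Prop, (forall a, A a -> P a) ->
    forall b : M, @dcl (langP L) (expandP P) A b <-> dcl A b.
Proof.
move=> _ HOP A AP b; split; last exact: definable_expandP.
have indep : dcl_indep_over (fun y => A y /\ ~ P y) P.
  by move=> y [Ay nPy]; case: (nPy (AP y Ay)).
move=> /(HOP A indep 1%N) /definable_ext; apply=> x; split; last first.
  by move=> <- lo hi xbox; exists x.
move=> /(closure_point (c := fun _ => b)); apply=> y yb i.
by rewrite (ord1 i).
Qed.
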